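(* Let $A$ be a unital C*-algebra and $\varepsilon:A\to\mathbb{C}$ a character (nonzero multiplicative linear functional). Let $u$ be a non-zero bounded linear functional on $A$ such that $u(1)=0$ and $u(x^*x)\ge0$ for all $x\in A$ with $\varepsilon(x^*x)=0$. Then $u=r(v-\varepsilon)$ for some $r>0$ and some state $v$ on $A$. *)

From Stdlib Require Import Reals.
Open Scope R_scope.

Record Cplx : Type := mkC { re : R ; im : R }.

Definition C0 : Cplx := mkC 0 0.
Definition C1 : Cplx := mkC 1 0.
Definition RtoC (r : R) : Cplx := mkC r 0.
Definition Cadd (z w : Cplx) : Cplx := mkC (re z + re w) (im z + im w).
Definition Copp (z : Cplx) : Cplx := mkC (- re z) (- im z).
Definition Csub (z w : Cplx) : Cplx := Cadd z (Copp w).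
Definition Cmul (z w : Cplx) : Cplx :=
  mkC (re z * re w - im z * im w) (re z * im w + im z * re w).
Definition Cconj (z : Cplx) : Cplx := mkC (re z) (- im z).
Definition Cmod (z : Cplx) : R := sqrt (re z * re z + im z * im z).
Definition Cnonneg (z : Cplx) : Prop := im z = 0 /\ 0 <= re z.

Record CstarAlg : Type := {
  car :> Type;
  add : car -> car -> car;
  zero : car;
  opp : car -> car;
  smul : Cplx -> car -> car;
  mul : car -> car -> car;
  one : car;
  star : car -> car;
  norm : car -> R;
  add_assoc : forall x y z, add x (add y z) = add (add x y) z;
  add_comm : forall x y, add x y = add y x;
  add_zero : forall x, add x zero = x;
  add_opp : forall x, add x (opp x) = zero;
  smul_smul : forall a b x, smul a (smul b x) = smul (Cmul a b) x;
  smul_one : forall x, smul C1 x = x;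
  smul_addl : forall a b x, smul (Cadd a b) x = add (smul a x) (smul b x);
  smul_addr : forall a x y, smul a (add x y) = add (smul a x) (smul a y);
  mul_assoc : forall x y z, mul x (mul y z) = mul (mul x y) z;
  mul_onel : forall x, mul one x = x;
  mul_oner : forall x, mul x one = x;
  mul_addl : forall x y z, mul (add x y) z = add (mul x z) (mul y z);
  mul_addr : forall x y z, mul x (add y z) = add (mul x y) (mul x z);
  mul_smull : forall a x y, mul (smul a x) y = smul a (mul x y);
  mul_smulr : forall a x y, mul x (smul a y) = smul a (mul x y);
  star_star : forall x, star (star x) = x;
  star_add : forall x y, star (add x y) = add (star x) (star y);
  star_smul : forall a x, star (smul a x) = smul (Cconj a) (star x);
  star_mul : forall x y, star (mul x y) = mul (star y) (star x);
  norm_eq0 : forall x, norm x = 0 -> x = zero;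
  norm_triangle : forall x y, norm (add x y) <= norm x + norm y;
  norm_smul : forall a x, norm (smul a x) = Cmod a * norm x;
  norm_mul : forall x y, norm (mul x y) <= norm x * norm y;
  norm_cstar : forall x, norm (mul (star x) x) = norm x * norm x;
  complete : forall s : nat -> car,
    (forall e, 0 < e -> exists N, forall m n, (N <= m)%nat -> (N <= n)%nat ->
        norm (add (s m) (opp (s n))) < e) ->
    exists l, forall e, 0 < e -> exists N, forall n, (N <= n)%nat ->
        norm (add (s n) (opp l)) < e
}.

Arguments add {_}. Arguments zero {_}. Arguments opp {_}. Arguments smul {_}.
Arguments mul {_}. Arguments one {_}. Arguments star {_}. Arguments norm {_}.

Definition is_linear {A : CstarAlg} (f : A -> Cplx) : Prop :=
  (forall x y, f (add x y) = Cadd (f x) (f y)) /\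
  (forall a x, f (smul a x) = Cmul a (f x)).

Definition is_character {A : CstarAlg} (f : A -> Cplx) : Prop :=
  is_linear f /\ (forall x y, f (mul x y) = Cmul (f x) (f y)) /\
  (exists x, f x <> C0).

Definition is_bounded {A : CstarAlg} (f : A -> Cplx) : Prop :=
  exists M : R, forall x, Cmod (f x) <= M * norm x.

Definition is_positive {A : CstarAlg} (f : A -> Cplx) : Prop :=
  forall x : A, Cnonneg (f (mul (star x) x)).

Definition is_state {A : CstarAlg} (v : A -> Cplx) : Prop :=
  is_linear v /\ is_positive v /\ v one = C1.

(* Put r = 4M + 1, where M bounds u, and v = ε + u/r.  Then v is linear with
   v(1) = 1, and it remains to see that v is positive.  Writing x = λ1 + y with
   ε(y) = 0, we get
     v(x⋆x) = |λ|² + (conj(λ) u(y) + λ u(y⋆) + u(y⋆y)) / r,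
   so it suffices that the bracket is real and at least -4M|λ|².  This follows
   from the hypothesis applied to y + λe, where e is a self-adjoint element of
   the kernel of ε of norm at most 2 that is an approximate left unit for y.

   Because the C*-algebra is only given axiomatically, the functional calculus
   behind e is built by hand: polynomial identities between commuting
   self-adjoint elements are checked by [ring] in the commutative subring they
   generate, square roots of 1 - Y with ‖Y‖ < 1 are limits of the iteration
   w ↦ (Y + w²)/2, norm bounds come from sum-of-squares certificates, and
   |ε(x)| ≤ ‖x‖ (hence ε(x⋆) = conj(ε(x))) comes from a Neumann series. *)

From Stdlib Require Import Reals Lra Lia Psatz ProofIrrelevance.
Open Scope R_scope.

Lemma Ceq (z w : Cplx) : re z = re w -> im z = im w -> z = w.
Proof. destruct z, w; simpl; intros; subst; reflexivity. Qed.

Ltac cplx := apply Ceq; simpl; try ring.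

Lemma Cmod_RtoC r : Cmod (RtoC r) = Rabs r.
Proof.
  unfold Cmod, RtoC; simpl. replace (r * r + 0 * 0) with (r * r) by ring.
  rewrite <- sqrt_Rsqr_abs. reflexivity.
Qed.

Lemma Cmod_C0 : Cmod C0 = 0.
Proof. unfold Cmod; simpl. replace (0 * 0 + 0 * 0) with 0 by ring. apply sqrt_0. Qed.

Lemma Cmod_ge0 z : 0 <= Cmod z.
Proof. apply sqrt_pos. Qed.

Lemma Cmod_sq z : Cmod z * Cmod z = re z * re z + im z * im z.
Proof. unfold Cmod. apply sqrt_sqrt. nra. Qed.

Lemma Cmod_re z : Rabs (re z) <= Cmod z.
Proof.
  unfold Cmod. rewrite <- sqrt_Rsqr_abs. apply sqrt_le_1_alt. unfold Rsqr. nra.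
Qed.

Lemma Cmod_im z : Rabs (im z) <= Cmod z.
Proof.
  unfold Cmod. rewrite <- sqrt_Rsqr_abs. apply sqrt_le_1_alt. unfold Rsqr. nra.
Qed.

Lemma Cmod_mul a b : Cmod (Cmul a b) = Cmod a * Cmod b.
Proof.
  unfold Cmod. rewrite <- sqrt_mult by nra. f_equal. destruct a, b; simpl. ring.
Qed.

Lemma Cmod_conj z : Cmod (Cconj z) = Cmod z.
Proof. unfold Cmod; simpl. f_equal. ring. Qed.

Lemma Cmod_add_le a b : Cmod (Cadd a b) <= Cmod a + Cmod b.
Proof.
  pose proof (Cmod_ge0 a). pose proof (Cmod_ge0 b). pose proof (Cmod_ge0 (Cadd a b)).
  pose proof (Cmod_re (Cmul a (Cconj b))) as Hab. rewrite Cmod_mul, Cmod_conj in Hab.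
  pose proof (Rle_abs (re (Cmul a (Cconj b)))).
  pose proof (Cmod_sq a). pose proof (Cmod_sq b). pose proof (Cmod_sq (Cadd a b)).
  destruct a as [p q], b as [s t]; simpl in *. nra.
Qed.

Definition Cinv (z : Cplx) : Cplx :=
  mkC (re z / (re z * re z + im z * im z)) (- im z / (re z * re z + im z * im z)).

Lemma le_of_forall_sub_le a b K : 0 <= K -> (forall e, 0 < e -> b - K * e <= a) -> b <= a.
Proof.
  intros HK H. apply Rnot_lt_le; intro Hc.
  specialize (H ((b - a) / (2 * (K + 1))) ltac:(apply Rdiv_lt_0_compat; lra)).
  assert (K * ((b - a) / (2 * (K + 1))) < b - a); [|lra].
  apply (Rmult_lt_reg_r (2 * (K + 1))); [lra|].
  replace (K * ((b - a) / (2 * (K + 1))) * (2 * (K + 1))) with (K * (b - a)) by (field; lra).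
  nra.
Qed.

Lemma le_of_fourth_power_bound (X H B : R) k : 0 <= X -> 0 <= H -> 0 < B ->
  X * X <= H -> 2 ^ k * (H * H) <= 1 -> (1 / 2) ^ k < B ^ 4 -> X <= B.
Proof.
  intros HX HH HB HXH Hk HB4.
  assert (Hpow : 2 ^ k * (1 / 2) ^ k = 1).
  { rewrite <- Rpow_mult_distr. replace (2 * (1 / 2)) with 1 by lra. apply pow1. }
  assert (H * H <= (1 / 2) ^ k).
  { apply (Rmult_le_reg_l (2 ^ k)); [apply pow_lt; lra|]. rewrite Hpow. lra. }
  apply Rnot_lt_le; intro Hc.
  assert (B ^ 4 <= X ^ 4) by (apply pow_incr; lra).
  assert (X ^ 4 = (X * X) * (X * X)) by ring. nra.
Qed.

Section Basics.
Context {A : CstarAlg}.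

Definition sub (x y : A) : A := add x (opp y).
Definition rsmul (r : R) (x : A) : A := smul (RtoC r) x.

Lemma add_0l (x : A) : add zero x = x.
Proof. rewrite add_comm; apply add_zero. Qed.

Lemma add_cancel_l (x y z : A) : add x y = add x z -> y = z.
Proof.
  intro H. rewrite <- (add_0l y), <- (add_0l z).
  rewrite <- (add_opp A x), (add_comm A x (opp x)).
  rewrite <- !add_assoc, H. reflexivity.
Qed.

Lemma smul_C0 (x : A) : smul C0 x = zero.
Proof.
  apply (add_cancel_l (smul C0 x)). rewrite add_zero.
  rewrite <- smul_addl. f_equal. cplx.
Qed.

Lemma opp_unique (x y : A) : add x y = zero -> y = opp x.
Proof. intro H. apply (add_cancel_l x). rewrite H, add_opp. reflexivity. Qed.

Lemma opp_smul (x : A) : opp x = smul (RtoC (-1)) x.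
Proof.
  symmetry; apply opp_unique.
  rewrite <- (smul_one A x) at 1. rewrite <- smul_addl.
  rewrite <- (smul_C0 x). f_equal. cplx.
Qed.

Lemma smul_zero (a : Cplx) : smul a (zero : A) = zero.
Proof.
  apply (add_cancel_l (smul a zero)). rewrite add_zero, <- smul_addr, add_zero. reflexivity.
Qed.

Lemma mul_0l (x : A) : mul zero x = zero.
Proof.
  apply (add_cancel_l (mul zero x)). rewrite add_zero, <- mul_addl, add_zero. reflexivity.
Qed.

Lemma mul_0r (x : A) : mul x zero = zero.
Proof.
  apply (add_cancel_l (mul x zero)). rewrite add_zero, <- mul_addr, add_zero. reflexivity.
Qed.

Lemma star_zero : star (zero : A) = zero.
Proof.
  transitivity (star (smul C0 (zero:A))). { f_equal; symmetry; apply smul_C0. }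
  rewrite star_smul. replace (Cconj C0) with C0 by cplx. apply smul_C0.
Qed.

Lemma star_one : star (one : A) = one.
Proof.
  rewrite <- (mul_oner A (star one)). rewrite <- (star_star A one) at 2.
  rewrite <- star_mul, mul_oner, star_star. reflexivity.
Qed.

Lemma opp_add (x y : A) : opp (add x y) = add (opp x) (opp y).
Proof. rewrite !opp_smul, smul_addr. reflexivity. Qed.

Lemma star_opp (x : A) : star (opp x) = opp (star x).
Proof. rewrite !opp_smul, star_smul. f_equal. cplx. Qed.

Lemma star_sub (x y : A) : star (sub x y) = sub (star x) (star y).
Proof. unfold sub. rewrite star_add, star_opp. reflexivity. Qed.

Lemma mul_oppl (x y : A) : mul (opp x) y = opp (mul x y).
Proof. rewrite !opp_smul, mul_smull. reflexivity. Qed.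

Lemma mul_oppr (x y : A) : mul x (opp y) = opp (mul x y).
Proof. rewrite !opp_smul, mul_smulr. reflexivity. Qed.

Lemma mul_subl (x y z : A) : mul (sub x y) z = sub (mul x z) (mul y z).
Proof. unfold sub. rewrite mul_addl, mul_oppl. reflexivity. Qed.

Lemma mul_subr (x y z : A) : mul x (sub y z) = sub (mul x y) (mul x z).
Proof. unfold sub. rewrite mul_addr, mul_oppr. reflexivity. Qed.

Lemma sub_diag (x : A) : sub x x = zero.
Proof. apply add_opp. Qed.

Lemma opp_opp (x : A) : opp (opp x) = x.
Proof. symmetry; apply opp_unique. rewrite add_comm; apply add_opp. Qed.

Lemma sub_eq0 (x y : A) : sub x y = zero -> x = y.
Proof.
  unfold sub; intro H. apply opp_unique in H.
  rewrite <- (opp_opp x), <- H, opp_opp. reflexivity.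
Qed.

Lemma norm_zero : norm (zero : A) = 0.
Proof. rewrite <- (smul_C0 zero), norm_smul, Cmod_C0. ring. Qed.

Lemma norm_rsmul r (x : A) : norm (rsmul r x) = Rabs r * norm x.
Proof. unfold rsmul. rewrite norm_smul, Cmod_RtoC. reflexivity. Qed.

Lemma norm_opp (x : A) : norm (opp x) = norm x.
Proof. rewrite opp_smul. fold (rsmul (-1) x). rewrite norm_rsmul.
  replace (Rabs (-1)) with 1 by (unfold Rabs; destruct Rcase_abs; lra). ring. Qed.

Lemma norm_nonneg (x : A) : 0 <= norm x.
Proof.
  pose proof (norm_triangle A x (opp x)). rewrite add_opp, norm_zero, norm_opp in H. lra.
Qed.

Lemma norm_sub_le (x y : A) : norm (sub x y) <= norm x + norm y.
Proof. unfold sub. rewrite <- (norm_opp y). apply norm_triangle. Qed.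

Lemma sub_anti (x y : A) : sub x y = opp (sub y x).
Proof. unfold sub. rewrite opp_add, opp_opp, add_comm. reflexivity. Qed.

Lemma norm_sub_sym (x y : A) : norm (sub x y) = norm (sub y x).
Proof. rewrite sub_anti, norm_opp. reflexivity. Qed.

Lemma norm_sub_tri (x y z : A) : norm (sub x z) <= norm (sub x y) + norm (sub y z).
Proof.
  replace (sub x z) with (add (sub x y) (sub y z)). apply norm_triangle.
  unfold sub.
  rewrite <- add_assoc, (add_assoc _ (opp y) y), (add_comm _ (opp y) y), add_opp, add_0l.
  reflexivity.
Qed.

Lemma norm_star_le (x : A) : norm x <= norm (star x).
Proof.
  destruct (Req_dec (norm x) 0) as [H|H].
  - rewrite H; apply norm_nonneg.
  - pose proof (norm_cstar A x). pose proof (norm_mul A (star x) x).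
    pose proof (norm_nonneg x). pose proof (norm_nonneg (star x)).
    assert (0 < norm x) by lra. nra.
Qed.

Lemma norm_star (x : A) : norm (star x) = norm x.
Proof.
  apply Rle_antisym. 2: apply norm_star_le.
  rewrite <- (star_star A x) at 2. apply norm_star_le.
Qed.

Lemma norm_mul_star (x : A) : norm (mul x (star x)) = norm x * norm x.
Proof. rewrite <- (star_star A x) at 1. rewrite norm_cstar, norm_star. reflexivity. Qed.

Lemma norm_one_le : norm (one : A) <= 1.
Proof.
  pose proof (norm_cstar A one). rewrite star_one, mul_oner in H.
  pose proof (norm_nonneg one). nra.
Qed.

Lemma sub_add_cancel (x y : A) : add (sub x y) y = x.
Proof.
  unfold sub. rewrite <- add_assoc, (add_comm _ (opp y) y), add_opp, add_zero. reflexivity.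
Qed.

Lemma norm_le_sub (x y : A) : norm x <= norm (sub x y) + norm y.
Proof. rewrite <- (sub_add_cancel x y) at 1. apply norm_triangle. Qed.

Lemma sub_sub_sub (a b c d : A) : sub (sub a b) (sub c d) = sub (sub a c) (sub b d).
Proof.
  unfold sub. rewrite !opp_add, !opp_opp, <- !add_assoc. f_equal.
  rewrite !add_assoc. f_equal. apply add_comm.
Qed.

Lemma norm_commutator_sub (c x l : A) :
  norm (sub (sub (mul c x) (mul x c)) (sub (mul c l) (mul l c))) <= 2 * norm c * norm (sub x l).
Proof.
  rewrite sub_sub_sub, <- mul_subr, <- mul_subl.
  eapply Rle_trans; [apply norm_sub_le|].
  pose proof (norm_mul A c (sub x l)). pose proof (norm_mul A (sub x l) c). lra.
Qed.

Lemma norm_skew_part_sub (x l : A) :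
  norm (sub (sub (star x) x) (sub (star l) l)) <= 2 * norm (sub x l).
Proof.
  rewrite sub_sub_sub, <- star_sub.
  eapply Rle_trans; [apply norm_sub_le|]. rewrite norm_star. lra.
Qed.

Lemma sub_zero_r (x : A) : sub x zero = x.
Proof. unfold sub. rewrite opp_smul, smul_zero, add_zero. reflexivity. Qed.

Lemma sub_sub_self (x w : A) : sub x (sub x w) = w.
Proof. unfold sub. rewrite opp_add, opp_opp, add_assoc, add_opp, add_0l. reflexivity. Qed.

Lemma add_sub_cancel_l (x y : A) : sub (add x y) x = y.
Proof. rewrite add_comm. unfold sub. rewrite <- add_assoc, add_opp, add_zero. reflexivity. Qed.

Lemma add_swap4 (x y z u : A) : add (add x y) (add z u) = add (add x z) (add y u).
Proof.
  rewrite <- !add_assoc. f_equal. rewrite !add_assoc. f_equal. apply add_comm.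
Qed.

Lemma sub_add_add (x1 x2 y1 y2 : A) :
  sub (add x1 x2) (add y1 y2) = add (sub x1 y1) (sub x2 y2).
Proof. unfold sub. rewrite opp_add, add_swap4. reflexivity. Qed.

Lemma add_self (a : A) : add a a = rsmul 2 a.
Proof.
  unfold rsmul. rewrite <- (smul_one A a) at 1 2. rewrite <- smul_addl. f_equal. cplx.
Qed.

Lemma rsmul_add_one (c1 c2 : R) :
  rsmul (c1 + c2) (one : A) = add (rsmul c1 one) (rsmul c2 one).
Proof. unfold rsmul. rewrite <- smul_addl. f_equal. cplx. Qed.

Lemma rsmul1_one : rsmul 1 (one : A) = one.
Proof. apply smul_one. Qed.

Lemma norm_rsmul_one_mul r (x : A) : norm (mul (rsmul r one) x) <= Rabs r * norm x.
Proof.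
  eapply Rle_trans. apply norm_mul. rewrite norm_rsmul.
  pose proof norm_one_le. pose proof (Rabs_pos r). pose proof (norm_nonneg x).
  pose proof (Rmult_le_pos _ _ H0 H1). nra.
Qed.

Lemma star_rsmul r (x : A) : star (rsmul r x) = rsmul r (star x).
Proof. unfold rsmul. rewrite star_smul. f_equal. cplx. Qed.

Lemma rsmul_mul_rsmul r s (x y : A) : mul (rsmul r x) (rsmul s y) = rsmul (r * s) (mul x y).
Proof. unfold rsmul. rewrite mul_smull, mul_smulr, smul_smul. f_equal. cplx. Qed.

Lemma rsmul_sub_one_rsmul_inv (L : R) (P : A) : L <> 0 ->
  rsmul L (sub one (rsmul (1 / L) P)) = sub (rsmul L one) P.
Proof.
  intro HL. unfold sub. rewrite !opp_smul. unfold rsmul.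
  rewrite smul_addr, !smul_smul. f_equal. f_equal. cplx. field. auto.
Qed.

Lemma rsmul_rsmul r s (x : A) : rsmul r (rsmul s x) = rsmul (r * s) x.
Proof. unfold rsmul. rewrite smul_smul. f_equal. cplx. Qed.

Lemma rsmul_sub r (x y : A) : rsmul r (sub x y) = sub (rsmul r x) (rsmul r y).
Proof.
  unfold sub, rsmul. rewrite smul_addr, !opp_smul, !smul_smul. f_equal. f_equal. cplx.
Qed.

End Basics.

Inductive sos {A : CstarAlg} : A -> Prop :=
| sos_sq b : star b = b -> sos (mul b b)
| sos_add x y : sos x -> sos y -> sos (add x y).

(* Identities between commuting elements are proved by [ring] in the
   commutative subring [GenRing] generated by a commuting set [Sset].  The
   ring declaration is local to this section, so every such identity used
   later is stated here. *)
Section GeneratedSubring.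
Context {A : CstarAlg}.
Variable Sset : A -> Prop.
Hypothesis Scomm : forall x y, Sset x -> Sset y -> mul x y = mul y x.

Inductive generated : A -> Prop :=
| gen_base x : Sset x -> generated x
| gen_rsmul (r : R) : generated (rsmul r one)
| gen_one : generated one
| gen_zero : generated zero
| gen_add x y : generated x -> generated y -> generated (add x y)
| gen_mul x y : generated x -> generated y -> generated (mul x y)
| gen_opp x : generated x -> generated (opp x).

Lemma rsmul_one_comm (r : R) (y : A) : mul (rsmul r one) y = mul y (rsmul r one).
Proof. unfold rsmul. rewrite mul_smull, mul_smulr, mul_onel, mul_oner. reflexivity. Qed.

Lemma commutes_with_generated (c : A) :
  (forall s, Sset s -> mul c s = mul s c) -> forall x, generated x -> mul c x = mul x c.
Proof.
  intros Hc x. induction 1 as [| | | |x y _ IHx _ IHy|x y _ IHx _ IHy|x _ IHx].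
  - auto.
  - symmetry; apply rsmul_one_comm.
  - rewrite mul_onel, mul_oner; auto.
  - rewrite mul_0l, mul_0r; auto.
  - rewrite mul_addl, mul_addr, IHx, IHy; auto.
  - rewrite mul_assoc, IHx, <- mul_assoc, IHy, mul_assoc; auto.
  - rewrite mul_oppl, mul_oppr, IHx; auto.
Qed.

Lemma generated_comm x y : generated x -> generated y -> mul x y = mul y x.
Proof.
  intros Hx Hy. apply (commutes_with_generated x); auto.
  intros s Hs. symmetry. apply (commutes_with_generated s); auto.
Qed.

Definition GenRing := { x : A | generated x }.
Definition gval (t : GenRing) : A := proj1_sig t.
Definition t0 : GenRing := exist _ zero gen_zero.
Definition t1 : GenRing := exist _ one gen_one.
Definition tR (r : R) : GenRing := exist _ (rsmul r one) (gen_rsmul r).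
Definition tadd (a b : GenRing) : GenRing :=
  exist _ (add (gval a) (gval b)) (gen_add _ _ (proj2_sig a) (proj2_sig b)).
Definition tmul (a b : GenRing) : GenRing :=
  exist _ (mul (gval a) (gval b)) (gen_mul _ _ (proj2_sig a) (proj2_sig b)).
Definition topp (a : GenRing) : GenRing := exist _ (opp (gval a)) (gen_opp _ (proj2_sig a)).
Definition tsub (a b : GenRing) : GenRing := tadd a (topp b).

Lemma gval_inj (a b : GenRing) : gval a = gval b -> a = b.
Proof. destruct a, b; simpl; intro; subst. f_equal; apply proof_irrelevance. Qed.

Lemma GenRing_ring : ring_theory t0 t1 tadd tmul tsub topp eq.
Proof.
  constructor; intros; apply gval_inj; simpl; unfold gval; simpl.
  - apply add_0l.
  - apply add_comm.
  - apply add_assoc.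
  - apply mul_onel.
  - apply generated_comm; apply proj2_sig.
  - apply mul_assoc.
  - apply mul_addl.
  - reflexivity.
  - apply add_opp.
Qed.

Add Ring generated_ring : GenRing_ring.

Lemma tR_add r s : tR (r + s) = tadd (tR r) (tR s).
Proof. apply gval_inj; simpl. unfold rsmul. rewrite <- smul_addl. f_equal. cplx. Qed.

Lemma tR_mul r s : tR (r * s) = tmul (tR r) (tR s).
Proof.
  apply gval_inj; simpl. unfold rsmul. rewrite mul_smull, mul_onel, smul_smul. f_equal. cplx.
Qed.

Lemma tR1 : tR 1 = t1.
Proof. apply gval_inj; apply rsmul1_one. Qed.

Lemma tR2 : tR 2 = tadd t1 t1.
Proof. replace 2 with (1 + 1) by lra. rewrite tR_add, tR1. reflexivity. Qed.

Lemma tR_pow2_S k : tR (2 ^ S k) = tmul (tadd t1 t1) (tR (2 ^ k)).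
Proof. rewrite <- tR2, <- tR_mul. reflexivity. Qed.

Lemma tR_sqrt_sq r : 0 <= r -> tR r = tmul (tR (sqrt r)) (tR (sqrt r)).
Proof. intro. rewrite <- tR_mul, sqrt_sqrt; auto. Qed.

Lemma tR_mul_inv (c : R) (X : GenRing) : c <> 0 -> tmul (tR c) (tmul (tR (1 / c)) X) = X.
Proof.
  intro Hc. transitivity (tmul (tR (c * (1 / c))) X). { rewrite tR_mul; ring. }
  replace (c * (1 / c)) with 1 by (field; auto). rewrite tR1; ring.
Qed.

Lemma half_step_sub (Y a b : GenRing) :
  gval (tsub (tmul (tR (1 / 2)) (tadd Y (tmul a a))) (tmul (tR (1 / 2)) (tadd Y (tmul b b)))) =
  gval (tmul (tR (1 / 2)) (tmul (tadd a b) (tsub a b))).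
Proof. f_equal. ring. Qed.

Lemma half_step_fixpoint_sq (Y l : GenRing) :
  l = tmul (tR (1 / 2)) (tadd Y (tmul l l)) ->
  gval (tmul (tsub t1 l) (tsub t1 l)) = gval (tsub t1 Y).
Proof.
  intro H. f_equal.
  assert (H2 : tmul (tR 2) l = tadd Y (tmul l l)).
  { rewrite H at 1. rewrite <- (tR_mul_inv 2 (tadd Y (tmul l l))) at 2 by lra. ring. }
  rewrite tR2 in H2.
  transitivity (tadd (tsub t1 (tmul (tadd t1 t1) l)) (tmul l l)); [ring|].
  rewrite H2. ring.
Qed.

Lemma sq_add_shifted_complement (a w : GenRing) (C d : R) :
  tmul w w = tsub (tR (C + d)) (tsub (tR C) (tsub t1 (tmul a a))) ->
  tadd (tmul a a) (tmul w w) = tR (1 + d).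
Proof. intro Hw. rewrite Hw, !tR_add, tR1. ring. Qed.

Inductive gsos : GenRing -> Prop :=
| gsos_sq b : gsos (tmul b b)
| gsos_add x y : gsos x -> gsos y -> gsos (tadd x y).

Lemma gsos_mul x y : gsos x -> gsos y -> gsos (tmul x y).
Proof.
  induction 1 as [b|x1 x2 H1 IH1 H2 IH2]; intro Hy.
  - induction Hy as [c|y1 y2 Hy1 IHy1 Hy2 IHy2].
    + replace (tmul (tmul b b) (tmul c c)) with (tmul (tmul b c) (tmul b c)) by ring.
      constructor.
    + replace (tmul (tmul b b) (tadd y1 y2))
        with (tadd (tmul (tmul b b) y1) (tmul (tmul b b) y2)) by ring.
      constructor; auto.
  - replace (tmul (tadd x1 x2) y) with (tadd (tmul x1 y) (tmul x2 y)) by ring.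
    constructor; auto.
Qed.

(* For h² + z² = 1 and g_k = z^(2^k), the defect 1 - g_k²(1 + 2^k h²) is a sum
   of squares: it is h⁴ for k = 0, and the step k -> k+1 multiplies the
   defect by 1 + g_k²(1 + 2^k h²) and adds (2^k h² g_k²)². *)
Section SquaringIterates.
Variables h z : GenRing.
Hypothesis sum_sq_one : tadd (tmul h h) (tmul z z) = t1.

Fixpoint sq_iter (k : nat) : GenRing :=
  match k with O => z | S k => tmul (sq_iter k) (sq_iter k) end.

Definition sq_iter_weight k :=
  tmul (tmul (sq_iter k) (sq_iter k)) (tadd t1 (tmul (tR (2 ^ k)) (tmul h h))).

Lemma sq_iter_weight_sos k : gsos (sq_iter_weight k).
Proof.
  unfold sq_iter_weight. rewrite (tR_sqrt_sq (2 ^ k)) by (apply pow_le; lra).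
  set (s := tR (sqrt (2 ^ k))).
  replace (tmul (tmul (sq_iter k) (sq_iter k)) (tadd t1 (tmul (tmul s s) (tmul h h))))
    with (tadd (tmul (sq_iter k) (sq_iter k))
               (tmul (tmul s (tmul h (sq_iter k))) (tmul s (tmul h (sq_iter k))))) by ring.
  repeat constructor.
Qed.

Lemma sq_iter_defect_sos k : gsos (tsub t1 (sq_iter_weight k)).
Proof.
  induction k as [|k IHk]; unfold sq_iter_weight in *; simpl sq_iter.
  - rewrite pow_O, tR1.
    replace (tsub t1 (tmul (tmul z z) (tadd t1 (tmul t1 (tmul h h)))))
      with (tadd (tmul (tmul h h) (tmul h h))
              (tmul (tsub t1 (tadd (tmul h h) (tmul z z))) (tadd t1 (tmul h h)))) by ring.
    rewrite sum_sq_one.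
    replace (tadd (tmul (tmul h h) (tmul h h)) (tmul (tsub t1 t1) (tadd t1 (tmul h h))))
      with (tmul (tmul h h) (tmul h h)) by ring.
    constructor.
  - set (g := sq_iter k) in *. set (w := tR (2 ^ k)).
    replace (tsub t1 (tmul (tmul (tmul g g) (tmul g g)) (tadd t1 (tmul (tR (2 ^ S k)) (tmul h h)))))
      with (tadd (tmul (tsub t1 (tmul (tmul g g) (tadd t1 (tmul w (tmul h h)))))
                       (tadd t1 (tmul (tmul g g) (tadd t1 (tmul w (tmul h h))))))
                 (tmul (tmul w (tmul (tmul h h) (tmul g g))) (tmul w (tmul (tmul h h) (tmul g g)))))
      by (unfold w; rewrite tR_pow2_S; ring).
    constructor; [|constructor].
    apply gsos_mul; auto. constructor; [rewrite <- tR1, (tR_sqrt_sq 1) by lra; constructor|].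
    apply sq_iter_weight_sos.
Qed.

Lemma sq_iter_partition k :
  tadd (tmul (tmul (tR (sqrt (2 ^ k))) (tmul h (sq_iter k)))
             (tmul (tR (sqrt (2 ^ k))) (tmul h (sq_iter k))))
       (tadd (tsub t1 (sq_iter_weight k)) (tmul (sq_iter k) (sq_iter k))) = t1.
Proof.
  unfold sq_iter_weight. rewrite (tR_sqrt_sq (2 ^ k)) by (apply pow_le; lra). ring.
Qed.

End SquaringIterates.

Hypothesis Sself_adjoint : forall x, Sset x -> star x = x.

Lemma generated_self_adjoint x : generated x -> star x = x.
Proof.
  induction 1 as [| | | |x y _ IHx _ IHy|x y Hx IHx Hy IHy|x _ IHx].
  - auto.
  - unfold rsmul. rewrite star_smul, star_one. f_equal. cplx.
  - apply star_one.
  - apply star_zero.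
  - rewrite star_add, IHx, IHy. reflexivity.
  - rewrite star_mul, IHx, IHy. apply generated_comm; auto.
  - rewrite star_opp, IHx. reflexivity.
Qed.

Lemma gsos_sos (P : GenRing) : gsos P -> sos (gval P).
Proof.
  induction 1.
  - apply sos_sq. apply generated_self_adjoint. exact (proj2_sig _).
  - apply sos_add; auto.
Qed.

End GeneratedSubring.

Lemma generated_mono {A : CstarAlg} (S1 S2 : A -> Prop) :
  (forall x, S1 x -> S2 x) -> forall x, generated S1 x -> generated S2 x.
Proof. intros H x Hx; induction Hx; try (constructor; auto; fail). Qed.

Definition pair_set {A : CstarAlg} (a b : A) : A -> Prop := fun x => x = a \/ x = b.

Section CommutingSets.
Context {A : CstarAlg}.

Lemma singleton_comm (a : A) : forall x y, a = x -> a = y -> mul x y = mul y x.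
Proof. intros x y <- <-. reflexivity. Qed.

Lemma singleton_self_adjoint (a : A) : star a = a -> forall x, a = x -> star x = x.
Proof. intros Ha x <-. exact Ha. Qed.

Lemma pair_set_comm (a b : A) : mul a b = mul b a ->
  forall x y, pair_set a b x -> pair_set a b y -> mul x y = mul y x.
Proof. intros Hab x y [->| ->] [->| ->]; auto. Qed.

Lemma pair_set_self_adjoint (a b : A) : star a = a -> star b = b ->
  forall x, pair_set a b x -> star x = x.
Proof. intros Ha Hb x [->| ->]; auto. Qed.

End CommutingSets.

Section Limits.
Context {A : CstarAlg}.

Definition conv (s : nat -> A) (l : A) :=
  forall e, 0 < e -> exists N, forall n, (N <= n)%nat -> norm (sub (s n) l) < e.

Lemma conv_S (s : nat -> A) l : conv s l -> conv (fun n => s (S n)) l.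
Proof. intros Hl e He. destruct (Hl e He) as [N HN]. exists N. intros n Hn. apply HN. lia. Qed.

Lemma conv_unique (s : nat -> A) l l' : conv s l -> conv s l' -> l = l'.
Proof.
  intros Hl Hl'. apply sub_eq0, norm_eq0, Rle_antisym; [|apply norm_nonneg].
  apply (le_of_forall_sub_le _ _ 2); [lra|].
  intros e He. destruct (Hl e He) as [N HN]. destruct (Hl' e He) as [N' HN'].
  specialize (HN (N + N')%nat ltac:(lia)). specialize (HN' (N + N')%nat ltac:(lia)).
  pose proof (norm_sub_tri l (s (N + N')%nat) l'). rewrite norm_sub_sym in HN. lra.
Qed.

Lemma conv_lipschitz (f : A -> A) K (s : nat -> A) l : 0 <= K ->
  (forall n, norm (sub (f (s n)) (f l)) <= K * norm (sub (s n) l)) ->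
  conv s l -> conv (fun n => f (s n)) (f l).
Proof.
  intros HK Hf Hl e He.
  destruct (Hl (e / (K + 1)) ltac:(apply Rdiv_lt_0_compat; lra)) as [N HN].
  exists N. intros n Hn. specialize (HN n Hn). eapply Rle_lt_trans; [apply Hf|].
  apply (Rle_lt_trans _ (K * (e / (K + 1)))).
  - apply Rmult_le_compat_l; lra.
  - apply (Rmult_lt_reg_r (K + 1)); [lra|].
    replace (K * (e / (K + 1)) * (K + 1)) with (K * e) by (field; lra). nra.
Qed.

Lemma conv_lipschitz_eq (f : A -> A) K (s : nat -> A) l c : 0 <= K ->
  (forall n, norm (sub (f (s n)) (f l)) <= K * norm (sub (s n) l)) ->
  conv s l -> (forall n, f (s n) = c) -> f l = c.
Proof.
  intros HK Hf Hl Hc. apply (conv_unique (fun n => f (s n))).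
  - exact (conv_lipschitz f K s l HK Hf Hl).
  - intros e He. exists O. intros n _. rewrite Hc, sub_diag, norm_zero. exact He.
Qed.

Lemma conv_norm_le (s : nat -> A) l B :
  conv s l -> (forall n, norm (s n) <= B) -> norm l <= B.
Proof.
  intros Hc Hb. apply Rnot_lt_le; intro H.
  destruct (Hc (norm l - B) ltac:(lra)) as [N HN].
  specialize (HN N (le_n _)). specialize (Hb N).
  pose proof (norm_le_sub l (s N)). rewrite norm_sub_sym in HN. lra.
Qed.

Lemma geometric_tail (s : nat -> A) q : 0 <= q < 1 ->
  (forall n, norm (sub (s (S n)) (s n)) <= q ^ n) ->
  forall n d, norm (sub (s (n + d)%nat) (s n)) <= q ^ n * (1 - q ^ d) / (1 - q).
Proof.
  intros Hq Hs n d. induction d as [|d IHd].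
  - rewrite Nat.add_0_r, sub_diag, norm_zero. simpl.
    replace (q ^ n * (1 - 1) / (1 - q)) with 0 by (field; lra). lra.
  - eapply Rle_trans; [apply (norm_sub_tri _ (s (n + d)%nat))|].
    replace (n + S d)%nat with (S (n + d)) by lia.
    pose proof (Hs (n + d)%nat) as Hstep. rewrite pow_add in Hstep.
    replace (q ^ n * (1 - q ^ S d) / (1 - q))
      with (q ^ n * q ^ d + q ^ n * (1 - q ^ d) / (1 - q)) by (simpl; field; lra).
    lra.
Qed.

Lemma geometric_conv (s : nat -> A) q : 0 <= q < 1 ->
  (forall n, norm (sub (s (S n)) (s n)) <= q ^ n) -> exists l, conv s l.
Proof.
  intros Hq Hs. destruct (complete A s) as [l Hl]; [|exists l; exact Hl].
  intros e He.
  destruct (pow_lt_1_zero q ltac:(rewrite Rabs_right; lra) (e * (1 - q))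
              ltac:(apply Rmult_lt_0_compat; lra)) as [N HN].
  assert (Htail : forall a b, (N <= a)%nat -> (a <= b)%nat -> norm (sub (s b) (s a)) < e).
  { intros a b Ha Hab. replace b with (a + (b - a))%nat by lia.
    eapply Rle_lt_trans; [apply (geometric_tail s q); auto|].
    specialize (HN a Ha). rewrite Rabs_right in HN by (apply Rle_ge, pow_le; lra).
    pose proof (pow_le q (b - a) (proj1 Hq)). pose proof (pow_le q a (proj1 Hq)).
    apply (Rmult_lt_reg_r (1 - q)); [lra|].
    replace (q ^ a * (1 - q ^ (b - a)) / (1 - q) * (1 - q))
      with (q ^ a * (1 - q ^ (b - a))) by (field; lra).
    nra. }
  exists N. intros m n Hm Hn. destruct (Compare_dec.le_lt_dec n m).
  - apply Htail; auto.
  - fold (sub (s m) (s n)). rewrite norm_sub_sym. apply Htail; auto; lia.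
Qed.

End Limits.

Definition half_step {A : CstarAlg} (Y w : A) : A := mul (rsmul (1 / 2) one) (add Y (mul w w)).

Lemma half_step_lipschitz {A : CstarAlg} (Sset : A -> Prop)
  (Scomm : forall x y, Sset x -> Sset y -> mul x y = mul y x) (Y a b : A) q :
  generated Sset Y -> generated Sset a -> generated Sset b -> norm a <= q -> norm b <= q ->
  norm (sub (half_step Y a) (half_step Y b)) <= q * norm (sub a b).
Proof.
  intros HY Ha Hb Haq Hbq.
  pose proof (half_step_sub Sset Scomm (exist _ Y HY) (exist _ a Ha) (exist _ b Hb)) as E.
  change (sub (half_step Y a) (half_step Y b) =
          mul (rsmul (1 / 2) one) (mul (add a b) (sub a b))) in E.
  rewrite E. eapply Rle_trans; [apply norm_rsmul_one_mul|].
  rewrite Rabs_right by lra.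
  pose proof (norm_mul A (add a b) (sub a b)). pose proof (norm_triangle A a b).
  pose proof (norm_nonneg (add a b)). pose proof (norm_nonneg (sub a b)).
  assert (norm (add a b) * norm (sub a b) <= 2 * q * norm (sub a b)) by nra.
  lra.
Qed.

Section SqrtOneSub.
Context {A : CstarAlg}.
Variable Y : A.
Hypothesis Y_self_adjoint : star Y = Y.
Variable rho : R.
Hypothesis norm_Y_le : norm Y <= rho.
Hypothesis rho_lt1 : rho < 1.

Let q := (1 + rho) / 2.

Lemma sqrt_iter_ratio_bounds : 0 <= q < 1.
Proof. pose proof (norm_nonneg Y). unfold q. lra. Qed.

(* A fixpoint w = (Y + w²)/2 gives (1 - w)² = 1 - Y, and w ↦ (Y + w²)/2
   contracts by q on the ball of radius q, which it preserves. *)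
Fixpoint sqrt_iter n := match n with O => zero | S n => half_step Y (sqrt_iter n) end.

Lemma sqrt_iter_generated n : generated (eq Y) (sqrt_iter n).
Proof.
  induction n; simpl.
  - apply gen_zero.
  - apply gen_mul; [apply gen_rsmul|].
    apply gen_add; [apply gen_base; reflexivity|apply gen_mul; auto].
Qed.

Lemma sqrt_iter_norm n : norm (sqrt_iter n) <= q.
Proof.
  pose proof (norm_nonneg Y). unfold q.
  induction n as [|n IHn]; simpl; [rewrite norm_zero; lra|].
  eapply Rle_trans; [apply norm_rsmul_one_mul|].
  pose proof (norm_triangle A Y (mul (sqrt_iter n) (sqrt_iter n))).
  pose proof (norm_mul A (sqrt_iter n) (sqrt_iter n)). pose proof (norm_nonneg (sqrt_iter n)).
  rewrite Rabs_right by lra. nra.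
Qed.

Lemma sqrt_iter_step n : norm (sub (sqrt_iter (S n)) (sqrt_iter n)) <= q ^ n.
Proof.
  pose proof sqrt_iter_ratio_bounds.
  induction n as [|n IHn].
  - simpl sqrt_iter at 2. rewrite sub_zero_r, pow_O. pose proof (sqrt_iter_norm 1). lra.
  - change (norm (sub (half_step Y (sqrt_iter (S n))) (half_step Y (sqrt_iter n))) <= q ^ S n).
    eapply Rle_trans.
    + apply (half_step_lipschitz (eq Y)).
      * apply singleton_comm.
      * apply gen_base; reflexivity.
      * apply sqrt_iter_generated.
      * apply sqrt_iter_generated.
      * apply sqrt_iter_norm.
      * apply sqrt_iter_norm.
    + simpl pow. apply Rmult_le_compat_l; lra.
Qed.

Section Limit.
Variable l : A.
Hypothesis sqrt_iter_conv : conv sqrt_iter l.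

Lemma sqrt_iter_limit_comm c : mul c Y = mul Y c -> mul c l = mul l c.
Proof.
  intro Hc. apply sub_eq0.
  apply (conv_lipschitz_eq (fun x => sub (mul c x) (mul x c)) (2 * norm c) sqrt_iter);
    auto using norm_commutator_sub.
  - pose proof (norm_nonneg c). lra.
  - intro n. rewrite (commutes_with_generated (eq Y) c), sub_diag; auto.
    + intros s <-. exact Hc.
    + apply sqrt_iter_generated.
Qed.

Lemma sqrt_iter_limit_self_adjoint : star l = l.
Proof.
  apply sub_eq0.
  apply (conv_lipschitz_eq (fun x => sub (star x) x) 2 sqrt_iter); auto using norm_skew_part_sub.
  - lra.
  - intro n. rewrite (generated_self_adjoint (eq Y) (singleton_comm Y)
                        (singleton_self_adjoint Y Y_self_adjoint)), sub_diag; auto.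
    apply sqrt_iter_generated.
Qed.

Lemma sqrt_iter_limit_fixpoint : l = half_step Y l.
Proof.
  assert (HlY : mul Y l = mul l Y) by (apply sqrt_iter_limit_comm; reflexivity).
  apply (conv_unique (fun n => sqrt_iter (S n))); [apply conv_S, sqrt_iter_conv|].
  apply (conv_lipschitz (half_step Y) q); [apply sqrt_iter_ratio_bounds| |exact sqrt_iter_conv].
  intro n. apply (half_step_lipschitz (pair_set Y l)).
  - apply pair_set_comm. exact HlY.
  - apply gen_base. left. reflexivity.
  - apply (generated_mono (eq Y)); [intros x <-; left; reflexivity|apply sqrt_iter_generated].
  - apply gen_base. right. reflexivity.
  - apply sqrt_iter_norm.
  - exact (conv_norm_le sqrt_iter l q sqrt_iter_conv sqrt_iter_norm).
Qed.

End Limit.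

Lemma sqrt_one_sub : exists z : A, star z = z /\ mul z z = sub one Y /\
  (forall c, mul c Y = mul Y c -> mul c z = mul z c).
Proof.
  destruct (geometric_conv sqrt_iter q sqrt_iter_ratio_bounds sqrt_iter_step) as [l Hl].
  assert (HlY : mul Y l = mul l Y) by (apply (sqrt_iter_limit_comm l Hl); reflexivity).
  exists (sub one l). split; [|split].
  - rewrite star_sub, star_one, (sqrt_iter_limit_self_adjoint l Hl). reflexivity.
  - apply (half_step_fixpoint_sq (pair_set Y l) (pair_set_comm Y l HlY)
             (exist _ Y (gen_base _ _ (or_introl eq_refl)))
             (exist _ l (gen_base _ _ (or_intror eq_refl)))).
    apply gval_inj. exact (sqrt_iter_limit_fixpoint l Hl).
  - intros c Hc. rewrite mul_subr, mul_subl, mul_onel, mul_oner, (sqrt_iter_limit_comm l Hl c Hc).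
    reflexivity.
Qed.

End SqrtOneSub.


Section SquareRoots.
Context {A : CstarAlg}.

(* For w = a + i b the C*-identity gives ‖w‖² = ‖a² + b²‖ ≤ t, and a = (w + w⋆)/2. *)
Lemma norm_sq_le_of_add_squares (a b : A) t : star a = a -> star b = b -> mul a b = mul b a ->
  add (mul a a) (mul b b) = rsmul t one -> 0 <= t -> norm a * norm a <= t.
Proof.
  intros Ha Hb Hab Hsum Ht.
  set (i := mkC 0 1). set (mi := mkC 0 (-1)).
  set (w := add a (smul i b)).
  assert (Hstar : star w = add a (smul mi b)).
  { unfold w. rewrite star_add, star_smul, Ha, Hb. reflexivity. }
  assert (Hww : mul (star w) w = add (mul a a) (mul b b)).
  { rewrite Hstar. unfold w. rewrite mul_addl, !mul_addr, !mul_smull, !mul_smulr, smul_smul.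
    rewrite Hab, <- add_assoc, (add_assoc _ (smul i (mul b a))), <- smul_addl.
    replace (Cadd i mi) with C0 by (unfold i, mi; cplx).
    rewrite smul_C0, add_0l. replace (Cmul mi i) with C1 by (unfold i, mi; cplx).
    rewrite smul_one. reflexivity. }
  assert (Hn : norm w * norm w <= t).
  { rewrite <- norm_cstar, Hww, Hsum, norm_rsmul, Rabs_right by lra.
    pose proof (@norm_one_le A). nra. }
  assert (Hs : add w (star w) = rsmul 2 a).
  { rewrite Hstar. unfold w. rewrite add_swap4, <- smul_addl.
    replace (Cadd i mi) with C0 by (unfold i, mi; cplx). rewrite smul_C0, add_zero.
    apply add_self. }
  assert (H2 : 2 * norm a <= 2 * norm w).
  { replace (2 * norm a) with (norm (rsmul 2 a)) by (rewrite norm_rsmul, Rabs_right; lra).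
    rewrite <- Hs. eapply Rle_trans; [apply norm_triangle|]. rewrite norm_star. lra. }
  pose proof (norm_nonneg a). nra.
Qed.

Lemma sqrt_rsmul_one_sub (P : A) c L : star P = P -> norm P <= c -> c < L ->
  exists w, star w = w /\ mul w w = sub (rsmul L one) P /\
    (forall x, mul x P = mul P x -> mul x w = mul w x).
Proof.
  intros HP HPc HcL. pose proof (norm_nonneg P).
  assert (HL : 0 < L) by lra.
  set (Y := rsmul (1 / L) P).
  assert (HY : norm Y <= c / L).
  { unfold Y. rewrite norm_rsmul, Rabs_right by (apply Rle_ge, Rlt_le, Rdiv_lt_0_compat; lra).
    unfold Rdiv. rewrite Rmult_1_l, Rmult_comm. apply Rmult_le_compat_r; auto.
    left. apply Rinv_0_lt_compat. lra. }
  assert (HcL' : c / L < 1).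
  { apply (Rmult_lt_reg_r L); auto. replace (c / L * L) with c by (field; lra). lra. }
  assert (HYsa : star Y = Y) by (unfold Y; rewrite star_rsmul, HP; reflexivity).
  destruct (sqrt_one_sub Y HYsa (c / L) HY HcL') as [z [Hz [Hzz Hzc]]].
  exists (rsmul (sqrt L) z). split; [|split].
  - rewrite star_rsmul, Hz. reflexivity.
  - rewrite rsmul_mul_rsmul, sqrt_sqrt, Hzz by lra. apply rsmul_sub_one_rsmul_inv. lra.
  - intros x Hx.
    assert (HxY : mul x Y = mul Y x)
      by (unfold Y, rsmul; rewrite mul_smull, mul_smulr, Hx; reflexivity).
    unfold rsmul. rewrite mul_smull, mul_smulr, Hzc; auto.
Qed.

Lemma norm_rsmul_one_sub_sq (b : A) c : star b = b -> norm b * norm b < c ->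
  norm (sub (rsmul c one) (mul b b)) <= c.
Proof.
  intros Hb Hc. pose proof (norm_nonneg b).
  assert (Hbb : star (mul b b) = mul b b) by (rewrite star_mul, Hb; reflexivity).
  destruct (sqrt_rsmul_one_sub (mul b b) (norm b * norm b) c Hbb (norm_mul A b b) Hc)
    as [w [Hw [Hww Hwc]]].
  assert (Hwn : norm w * norm w <= c).
  { apply (norm_sq_le_of_add_squares w b); auto.
    - symmetry. apply Hwc. apply mul_assoc.
    - rewrite Hww. apply sub_add_cancel.
    - nra. }
  rewrite <- Hww. pose proof (norm_mul A w w). lra.
Qed.

Lemma sos_shift_norm_le (P : A) : sos P ->
  exists C, forall c, C <= c -> norm (sub (rsmul c one) P) <= c.
Proof.
  induction 1 as [b Hb|x y _ [C1 H1] _ [C2 H2]].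
  - exists (norm b * norm b + 1). intros c Hc. apply norm_rsmul_one_sub_sq; auto. lra.
  - exists (Rmax C1 0 + Rmax C2 0). intros c Hc.
    pose proof (Rmax_l C1 0). pose proof (Rmax_r C1 0).
    pose proof (Rmax_l C2 0). pose proof (Rmax_r C2 0).
    replace c with ((c - Rmax C2 0) + Rmax C2 0) at 1 by ring.
    rewrite rsmul_add_one, sub_add_add.
    eapply Rle_trans; [apply norm_triangle|].
    pose proof (H1 (c - Rmax C2 0) ltac:(lra)). pose proof (H2 (Rmax C2 0) ltac:(lra)). lra.
Qed.

(* If ‖a‖² = 1 + 2d with d > 0, a square root w of d + (1 - a²) (which exists
   because 1 - a² is a sum of squares) gives a² + w² = 1 + d, contradicting
   [norm_sq_le_of_add_squares]. *)
Lemma norm_sq_le_one_of_sq_add_sos (a P : A) : star a = a -> sos P ->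
  add (mul a a) P = one -> norm a * norm a <= 1.
Proof.
  intros Ha HP Hsum.
  assert (HP1 : P = sub one (mul a a)) by (rewrite <- Hsum, add_sub_cancel_l; reflexivity).
  destruct (sos_shift_norm_le P HP) as [C HC].
  apply Rnot_lt_le; intro Hlt.
  set (d := (norm a * norm a - 1) / 2).
  set (Q := sub (rsmul C one) P).
  assert (HQgen : generated (eq a) Q).
  { unfold Q, sub. rewrite HP1.
    repeat first [apply gen_add | apply gen_opp | apply gen_mul | apply gen_rsmul | apply gen_one
                 | apply gen_base; reflexivity]. }
  assert (HQsa : star Q = Q).
  { exact (generated_self_adjoint (eq a) (singleton_comm a) (singleton_self_adjoint a Ha)
             Q HQgen). }
  destruct (sqrt_rsmul_one_sub Q C (C + d) HQsa (HC C (Rle_refl C)) ltac:(unfold d; lra))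
    as [w [Hw [Hww Hwc]]].
  assert (Haw : mul a w = mul w a).
  { apply Hwc. apply (generated_comm (eq a) (singleton_comm a)); [|exact HQgen].
    apply gen_base; reflexivity. }
  assert (Hsq : add (mul a a) (mul w w) = rsmul (1 + d) one).
  { set (S2 := pair_set a w).
    pose (ta := exist (generated S2) a (gen_base S2 a (or_introl eq_refl))).
    pose (tw := exist (generated S2) w (gen_base S2 w (or_intror eq_refl))).
    assert (E : tmul S2 tw tw =
                tsub S2 (tR S2 (C + d)) (tsub S2 (tR S2 C) (tsub S2 (t1 S2) (tmul S2 ta ta)))).
    { apply gval_inj. simpl. rewrite Hww. unfold Q. rewrite HP1. reflexivity. }
    exact (f_equal (gval S2) (sq_add_shifted_complement S2 (pair_set_comm a w Haw) ta tw C d E)). }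
  pose proof (norm_sq_le_of_add_squares a w (1 + d) Ha Hw Haw Hsq ltac:(unfold d; lra)).
  unfold d in *. lra.
Qed.

End SquareRoots.

Section LinearFunctionals.
Context {A : CstarAlg}.
Variable f : A -> Cplx.
Hypothesis f_linear : is_linear f.

Lemma linear_zero : f zero = C0.
Proof. rewrite <- (smul_C0 (zero : A)), (proj2 f_linear). cplx. Qed.

Lemma linear_opp x : f (opp x) = Copp (f x).
Proof. rewrite opp_smul, (proj2 f_linear). cplx. Qed.

Lemma linear_sub x y : f (sub x y) = Csub (f x) (f y).
Proof. unfold sub. rewrite (proj1 f_linear), linear_opp. reflexivity. Qed.

End LinearFunctionals.

Lemma character_one {A : CstarAlg} (eps : A -> Cplx) :
  is_character eps -> eps one = C1.
Proof.
  intros [_ [Hmul [x0 Hx0]]].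
  pose proof (f_equal eps (mul_onel A x0)) as E. rewrite Hmul in E.
  destruct (eps one) as [a b]. destruct (eps x0) as [c d]. simpl in E.
  injection E; intros E2 E1.
  assert (Hcd : c * c + d * d <> 0).
  { intro H0. apply Hx0. assert (c = 0) by nra. assert (d = 0) by nra. subst. reflexivity. }
  assert (Ha : (a - 1) * (c * c + d * d) = 0).
  { replace ((a - 1) * (c * c + d * d))
      with (c * (a * c - b * d - c) + d * (a * d + b * c - d)) by ring.
    rewrite E1, E2. ring. }
  assert (Hb : b * (c * c + d * d) = 0).
  { replace (b * (c * c + d * d))
      with (- d * (a * c - b * d - c) + c * (a * d + b * c - d)) by ring.
    rewrite E1, E2. ring. }
  apply Rmult_integral in Ha. apply Rmult_integral in Hb.
  destruct Ha as [Ha|Ha]; [|contradiction]. destruct Hb as [Hb|Hb]; [|contradiction].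
  apply Ceq; simpl; lra.
Qed.

Lemma neumann_fixpoint {A : CstarAlg} (a : A) : norm a < 1 -> exists l : A, l = add one (mul a l).
Proof.
  intro Ha. pose proof (norm_nonneg a).
  set (F := fun x => add one (mul a x)).
  assert (HF : forall x y, norm (sub (F x) (F y)) <= norm a * norm (sub x y)).
  { intros x y. unfold F. rewrite sub_add_add, sub_diag, add_0l, <- mul_subr. apply norm_mul. }
  set (s := fix s n := match n with O => zero | S n => F (s n) end).
  assert (Hstep : forall n, norm (sub (s (S n)) (s n)) <= norm a ^ n).
  { induction n as [|n IHn].
    - simpl. unfold F. rewrite sub_zero_r, mul_0r, add_zero. apply norm_one_le.
    - eapply Rle_trans; [apply HF|]. simpl pow. apply Rmult_le_compat_l; [lra|exact IHn]. }
  destruct (geometric_conv s (norm a) ltac:(lra) Hstep) as [l Hl].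
  exists l. apply (conv_unique (fun n => s (S n))); [apply conv_S, Hl|].
  exact (conv_lipschitz F (norm a) s l H (fun n => HF (s n) l) Hl).
Qed.

Section Characters.
Context {A : CstarAlg}.
Variable eps : A -> Cplx.
Hypothesis eps_linear : is_linear eps.
Hypothesis eps_mul : forall x y, eps (mul x y) = Cmul (eps x) (eps y).
Hypothesis eps_one : eps one = C1.

(* If |ε(x)| > ‖x‖, then a = x / ε(x) has norm < 1 and ε(a) = 1, so the
   Neumann solution of l = 1 + a l would satisfy ε(l) = 1 + ε(l). *)
Lemma character_norm_le x : Cmod (eps x) <= norm x.
Proof.
  apply Rnot_lt_le; intro H.
  set (lam := eps x) in *. pose proof (norm_nonneg x).
  assert (Hn2 : 0 < re lam * re lam + im lam * im lam) by (rewrite <- Cmod_sq; nra).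
  set (a := smul (Cinv lam) x).
  assert (Hci : Cmod (Cinv lam) * Cmod lam = 1).
  { rewrite <- Cmod_mul. unfold Cmod. rewrite <- sqrt_1. f_equal.
    unfold Cinv; simpl. field. lra. }
  assert (Han : norm a < 1).
  { unfold a. rewrite norm_smul. pose proof (Cmod_ge0 (Cinv lam)). nra. }
  assert (Hea : eps a = C1).
  { unfold a. rewrite (proj2 eps_linear). fold lam. unfold Cinv; cplx; field; lra. }
  destruct (neumann_fixpoint a Han) as [l Hl].
  assert (E : eps l = Cadd C1 (eps l)).
  { rewrite Hl at 1. rewrite (proj1 eps_linear), eps_mul, eps_one, Hea. cplx. }
  apply (f_equal re) in E. simpl in E. lra.
Qed.

Lemma character_shift_bound h r : star h = h ->
  re (eps h) * re (eps h) + (im (eps h) + r) * (im (eps h) + r) <= norm h * norm h + r * r.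
Proof.
  intro Hh. set (w := add h (smul (mkC 0 r) one)).
  assert (Ew : eps w = mkC (re (eps h)) (im (eps h) + r)).
  { unfold w. rewrite (proj1 eps_linear), (proj2 eps_linear), eps_one. cplx. }
  assert (Mw : mul (star w) w = add (mul h h) (rsmul (r * r) one)).
  { unfold w. rewrite star_add, star_smul, star_one, Hh.
    rewrite mul_addl, !mul_addr, !mul_smull, !mul_smulr, smul_smul, mul_oner, mul_onel, mul_onel.
    rewrite <- add_assoc, (add_assoc _ (smul (mkC 0 r) h)), <- smul_addl.
    replace (Cadd (mkC 0 r) (Cconj (mkC 0 r))) with C0 by cplx. rewrite smul_C0, add_0l.
    unfold rsmul. f_equal. f_equal. cplx. }
  pose proof (character_norm_le w) as B. rewrite Ew in B.
  pose proof (Cmod_ge0 (mkC (re (eps h)) (im (eps h) + r))).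
  pose proof (Cmod_sq (mkC (re (eps h)) (im (eps h) + r))) as Hsq. simpl in Hsq.
  pose proof (norm_cstar A w) as Hw. rewrite Mw in Hw.
  pose proof (norm_triangle A (mul h h) (rsmul (r * r) one)) as Htri.
  rewrite norm_rsmul, Rabs_right in Htri by nra. pose proof (@norm_one_le A).
  pose proof (norm_mul A h h). assert (0 <= r * r) by nra. nra.
Qed.

(* Taking r large with the sign of t = im ε(h), the bound 2tr ≤ ‖h‖²
   implied by [character_shift_bound] fails unless t = 0. *)
Lemma character_self_adjoint_real h : star h = h -> im (eps h) = 0.
Proof.
  intro Hh. set (t := im (eps h)). set (N := norm h * norm h).
  destruct (Req_dec t 0) as [Ht|Ht]; auto. exfalso.
  pose proof (character_shift_bound h ((N + 1) / (2 * t)) Hh) as Hw. fold t N in Hw.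
  assert (2 * t * ((N + 1) / (2 * t)) = N + 1) by (field; auto).
  pose proof (Rle_0_sqr (re (eps h))). pose proof (Rle_0_sqr t). unfold Rsqr in *. nra.
Qed.

Lemma character_star x : eps (star x) = Cconj (eps x).
Proof.
  set (i := mkC 0 1).
  pose proof (character_self_adjoint_real (add x (star x))) as H1.
  rewrite star_add, star_star, add_comm in H1. specialize (H1 eq_refl).
  assert (Hskew : star (smul i (sub x (star x))) = smul i (sub x (star x))).
  { rewrite star_smul, star_sub, star_star, (sub_anti (star x) x), opp_smul, smul_smul.
    f_equal. unfold i; cplx. }
  pose proof (character_self_adjoint_real _ Hskew) as H2.
  rewrite (proj1 eps_linear) in H1. rewrite (proj2 eps_linear), (linear_sub eps eps_linear) in H2.
  unfold i in H2. simpl in H1, H2.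
  apply Ceq; simpl; lra.
Qed.

End Characters.

Fixpoint pow2 {A : CstarAlg} (z : A) (k : nat) : A :=
  match k with O => z | S k => mul (pow2 z k) (pow2 z k) end.

Section ApproximateUnit.
Context {A : CstarAlg}.

Lemma pow2_norm_le (z : A) k : norm z <= 1 -> norm (pow2 z k) <= 1.
Proof.
  intro Hz. induction k as [|k IHk]; simpl; auto.
  eapply Rle_trans; [apply norm_mul|]. pose proof (norm_nonneg (pow2 z k)). nra.
Qed.

Lemma pow2_self_adjoint (z : A) k : star z = z -> star (pow2 z k) = pow2 z k.
Proof.
  intro Hz. induction k as [|k IHk]; simpl; auto. rewrite star_mul, IHk. reflexivity.
Qed.

Lemma gval_sq_iter (z : A) (S2 : A -> Prop) (zg : generated S2 z) k :
  gval S2 (sq_iter S2 (exist _ z zg) k) = pow2 z k.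
Proof. induction k as [|k IHk]; [reflexivity|]. simpl. rewrite <- IHk. reflexivity. Qed.

Lemma norm_mul_pow2_sq_le (h z : A) : star h = h -> star z = z -> mul h z = mul z h ->
  add (mul h h) (mul z z) = one ->
  forall k, 2 ^ k * (norm (mul h (pow2 z k)) * norm (mul h (pow2 z k))) <= 1.
Proof.
  intros Hh Hz Hhz Hsum k.
  set (S2 := pair_set h z).
  set (th := exist (generated S2) h (gen_base S2 h (or_introl eq_refl))).
  set (tz := exist (generated S2) z (gen_base S2 z (or_intror eq_refl))).
  assert (S2_comm := pair_set_comm h z Hhz).
  assert (S2_sa := pair_set_self_adjoint h z Hh Hz).
  assert (Hsum' : tadd S2 (tmul S2 th th) (tmul S2 tz tz) = t1 S2) by (apply gval_inj; exact Hsum).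
  set (ta := tmul S2 (tR S2 (sqrt (2 ^ k))) (tmul S2 th (sq_iter S2 tz k))).
  assert (Hta : gval S2 ta = rsmul (sqrt (2 ^ k)) (mul h (pow2 z k))).
  { change (mul (rsmul (sqrt (2 ^ k)) one) (mul h (gval S2 (sq_iter S2 tz k))) =
            rsmul (sqrt (2 ^ k)) (mul h (pow2 z k))).
    unfold tz. rewrite (gval_sq_iter z S2). unfold rsmul. rewrite mul_smull, mul_onel.
    reflexivity. }
  assert (Hbound : norm (gval S2 ta) * norm (gval S2 ta) <= 1).
  { apply (norm_sq_le_one_of_sq_add_sos _
      (gval S2 (tadd S2 (tsub S2 (t1 S2) (sq_iter_weight S2 th tz k))
                        (tmul S2 (sq_iter S2 tz k) (sq_iter S2 tz k))))).
    - apply (generated_self_adjoint S2); auto. exact (proj2_sig _).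
    - apply (gsos_sos S2); auto. apply gsos_add; [|apply gsos_sq].
      apply (sq_iter_defect_sos S2 S2_comm th tz Hsum').
    - exact (f_equal (gval S2) (sq_iter_partition S2 S2_comm th tz k)). }
  rewrite Hta, norm_rsmul, Rabs_right in Hbound by (apply Rle_ge, sqrt_pos).
  rewrite <- (sqrt_sqrt (2 ^ k)) by (apply pow_le; lra). nra.
Qed.

Lemma norm_sq_mul_sq_le (g y : A) : star g = g -> norm g <= 1 ->
  norm (mul (mul g g) y) * norm (mul (mul g g) y) <= norm (mul (mul y (star y)) g).
Proof.
  intros Hg Hg1. rewrite <- norm_mul_star. rewrite star_mul, star_mul, Hg.
  replace (mul (mul (mul g g) y) (mul (star y) (mul g g)))
    with (mul (mul g g) (mul (mul (mul y (star y)) g) g)) by (rewrite !mul_assoc; reflexivity).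
  set (hg := mul (mul y (star y)) g).
  eapply Rle_trans; [apply norm_mul|].
  pose proof (norm_mul A hg g). pose proof (norm_mul A g g).
  pose proof (norm_nonneg g). pose proof (norm_nonneg (mul g g)). pose proof (norm_nonneg hg).
  assert (norm (mul g g) <= 1) by nra.
  assert (norm (mul hg g) <= norm hg) by nra.
  pose proof (norm_nonneg (mul hg g)). nra.
Qed.

Variable eps : A -> Cplx.
Hypothesis eps_linear : is_linear eps.
Hypothesis eps_mul : forall x y, eps (mul x y) = Cmul (eps x) (eps y).
Hypothesis eps_one : eps one = C1.

Lemma character_pow2 (z : A) : eps (mul z z) = C1 ->
  forall k, eps (mul (pow2 z k) (pow2 z k)) = C1.
Proof.
  intros Hz k. induction k as [|k IHk]; simpl; auto. rewrite eps_mul, IHk. cplx.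
Qed.

(* With h = y y⋆ and z = sqrt(1 - h²), the elements g = z^(2^k) satisfy
   ε(g²) = 1 and ‖h g‖² ≤ 2^-k, so e = 1 - g² is the required approximate
   unit for large k. *)
Lemma approximate_unit_of_norm_half (y : A) : eps y = C0 -> norm y = 1 / 2 ->
  forall ep, 0 < ep ->
  exists e, eps e = C0 /\ star e = e /\ norm e <= 2 /\ norm (sub y (mul e y)) <= ep.
Proof.
  intros Hy Hyn ep Hep.
  set (h := mul y (star y)).
  assert (Hhs : star h = h) by (unfold h; rewrite star_mul, star_star; reflexivity).
  assert (Heh : eps h = C0) by (unfold h; rewrite eps_mul, Hy; cplx).
  assert (HYs : star (mul h h) = mul h h) by (rewrite star_mul, Hhs; reflexivity).
  assert (HYn : norm (mul h h) <= 1 / 16).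
  { eapply Rle_trans; [apply norm_mul|]. unfold h. rewrite norm_mul_star, Hyn. lra. }
  destruct (sqrt_one_sub (mul h h) HYs (1 / 16) HYn ltac:(lra)) as [z [Hz [Hzz Hzc]]].
  assert (Hhz : mul h z = mul z h) by (apply Hzc, mul_assoc).
  assert (Hsum : add (mul h h) (mul z z) = one) by (rewrite Hzz, add_comm; apply sub_add_cancel).
  assert (Hzn : norm z <= 1).
  { assert (norm z * norm z <= 1); [|pose proof (norm_nonneg z); nra].
    apply (norm_sq_le_of_add_squares z h 1); auto; [|lra].
    rewrite add_comm, Hsum. symmetry. apply rsmul1_one. }
  destruct (pow_lt_1_zero (1 / 2) ltac:(rewrite Rabs_right; lra) (ep ^ 4)
              ltac:(apply pow_lt; lra)) as [k Hk].
  specialize (Hk k (le_n _)). rewrite Rabs_right in Hk by (apply Rle_ge, pow_le; lra).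
  set (g := pow2 z k).
  assert (Hgs : star g = g) by (apply pow2_self_adjoint, Hz).
  assert (Hgn : norm g <= 1) by (apply pow2_norm_le, Hzn).
  assert (Heg : eps (mul g g) = C1).
  { apply character_pow2. rewrite Hzz, linear_sub, eps_one, eps_mul, Heh by auto. cplx. }
  exists (sub one (mul g g)). split; [|split; [|split]].
  - rewrite linear_sub, eps_one, Heg by auto. cplx.
  - rewrite star_sub, star_one, star_mul, Hgs. reflexivity.
  - eapply Rle_trans; [apply norm_sub_le|]. pose proof (@norm_one_le A).
    pose proof (norm_mul A g g). pose proof (norm_nonneg g). nra.
  - rewrite mul_subl, mul_onel, sub_sub_self.
    apply (le_of_fourth_power_bound _ (norm (mul h g)) ep k); auto using norm_nonneg.
    + exact (norm_sq_mul_sq_le g y Hgs Hgn).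
    + exact (norm_mul_pow2_sq_le h z Hhs Hz Hhz Hsum k).
Qed.

Lemma kernel_approximate_unit (y : A) : eps y = C0 -> forall ep, 0 < ep ->
  exists e, eps e = C0 /\ star e = e /\ norm e <= 2 /\ norm (sub y (mul e y)) <= ep.
Proof.
  intros Hy ep Hep.
  destruct (Req_dec (norm y) 0) as [Hy0|Hy0].
  { apply norm_eq0 in Hy0. subst y. exists zero.
    rewrite linear_zero, star_zero, norm_zero, mul_0r, sub_diag, norm_zero by auto.
    repeat split; lra. }
  pose proof (norm_nonneg y). set (s := 2 * norm y).
  assert (Hs : 0 < s) by (unfold s; lra).
  assert (Hy' : eps (rsmul (1 / s) y) = C0) by (unfold rsmul; rewrite (proj2 eps_linear), Hy; cplx).
  assert (Hy'n : norm (rsmul (1 / s) y) = 1 / 2).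
  { rewrite norm_rsmul, Rabs_right by (apply Rle_ge, Rlt_le, Rdiv_lt_0_compat; lra).
    unfold s. field. lra. }
  destruct (approximate_unit_of_norm_half _ Hy' Hy'n (ep / s) ltac:(apply Rdiv_lt_0_compat; lra))
    as [e [He0 [Hes [Hen Herr]]]].
  exists e. repeat split; auto.
  replace (sub y (mul e y)) with (rsmul s (sub (rsmul (1 / s) y) (mul e (rsmul (1 / s) y)))).
  - rewrite norm_rsmul, Rabs_right by lra.
    apply (Rmult_le_compat_l s) in Herr; [|lra].
    replace (s * (ep / s)) with ep in Herr by (field; lra). exact Herr.
  - unfold rsmul at 3. rewrite mul_smulr. fold (rsmul (1 / s) (mul e y)).
    rewrite <- rsmul_sub, rsmul_rsmul. replace (s * (1 / s)) with 1 by (field; lra).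
    apply smul_one.
Qed.

End ApproximateUnit.

Section ShiftedState.
Context {A : CstarAlg}.

Lemma star_mul_unit_add (y : A) (c : Cplx) :
  mul (star (add (smul c one) y)) (add (smul c one) y) =
  add (add (smul (Cmul (Cconj c) c) one) (smul (Cconj c) y))
      (add (smul c (star y)) (mul (star y) y)).
Proof.
  rewrite star_add, star_smul, star_one, mul_addl, !mul_addr, !mul_smull, !mul_smulr,
    !mul_onel, mul_oner, smul_smul. reflexivity.
Qed.

Lemma star_mul_add_smul (y e : A) (c : Cplx) : star e = e ->
  mul (star (add y (smul c e))) (add y (smul c e)) =
  add (add (mul (star y) y) (smul c (mul (star y) e)))
      (add (smul (Cconj c) (mul e y)) (smul (Cmul (Cconj c) c) (mul e e))).
Proof.
  intro He.
  rewrite star_add, star_smul, He, mul_addl, !mul_addr, !mul_smull, !mul_smulr, smul_smul.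
  reflexivity.
Qed.

Variables eps u : A -> Cplx.
Hypothesis eps_linear : is_linear eps.
Hypothesis eps_mul : forall x y, eps (mul x y) = Cmul (eps x) (eps y).
Hypothesis eps_one : eps one = C1.
Hypothesis u_linear : is_linear u.
Variable M : R.
Hypothesis M_nonneg : 0 <= M.
Hypothesis u_bounded : forall x, Cmod (u x) <= M * norm x.
Hypothesis u_kernel_pos :
  forall x : A, eps (mul (star x) x) = C0 -> Cnonneg (u (mul (star x) x)).

Definition cross_term (lam : Cplx) (y : A) : Cplx :=
  Cadd (Cmul (Cconj lam) (u y)) (Cmul lam (u (star y))).

Lemma Cmod_cross_term_le lam y : Cmod (cross_term lam y) <= 2 * Cmod lam * M * norm y.
Proof.
  unfold cross_term. eapply Rle_trans; [apply Cmod_add_le|]. rewrite !Cmod_mul, Cmod_conj.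
  pose proof (u_bounded y). pose proof (u_bounded (star y)). rewrite norm_star in *.
  pose proof (Cmod_ge0 lam). nra.
Qed.

Lemma u_star_mul_self_nonneg x : eps x = C0 -> Cnonneg (u (mul (star x) x)).
Proof. intro Hx. apply u_kernel_pos. rewrite eps_mul, Hx. cplx. Qed.

Lemma cross_term_split (y e : A) lam : star e = e ->
  Cadd (u (mul (star y) y)) (cross_term lam y) =
  Cadd (Csub (u (mul (star (add y (smul lam e))) (add y (smul lam e))))
             (Cmul (Cmul (Cconj lam) lam) (u (mul e e))))
       (cross_term lam (sub y (mul e y))).
Proof.
  intro He. unfold cross_term.
  rewrite star_mul_add_smul, star_sub, star_mul, He by exact He.
  rewrite !(proj1 u_linear), !(proj2 u_linear), !(linear_sub u u_linear). cplx.
Qed.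

Lemma cross_term_approx (y : A) lam ep : eps y = C0 -> 0 < ep ->
  exists c, Cmod c <= 2 * Cmod lam * M * ep /\
    im (Cadd (u (mul (star y) y)) (cross_term lam y)) = im c /\
    - 4 * M * Cmod lam * Cmod lam + re c <= re (Cadd (u (mul (star y) y)) (cross_term lam y)).
Proof.
  intros Hy Hep.
  destruct (kernel_approximate_unit eps eps_linear eps_mul eps_one y Hy ep Hep)
    as [e [He0 [Hes [Hen Herr]]]].
  exists (cross_term lam (sub y (mul e y))). split.
  { eapply Rle_trans; [apply Cmod_cross_term_le|].
    pose proof (Cmod_ge0 lam). apply Rmult_le_compat_l; [nra|exact Herr]. }
  rewrite (cross_term_split y e lam Hes).
  assert (Hz : eps (add y (smul lam e)) = C0).
  { rewrite (proj1 eps_linear), (proj2 eps_linear), Hy, He0. cplx. }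
  destruct (u_star_mul_self_nonneg _ Hz) as [Hz1 Hz2].
  destruct (u_star_mul_self_nonneg e He0) as [He1 He2]. rewrite Hes in He1, He2.
  assert (Hee : re (u (mul e e)) <= 4 * M).
  { pose proof (Cmod_re (u (mul e e))). pose proof (u_bounded (mul e e)).
    pose proof (norm_mul A e e). pose proof (norm_nonneg e).
    pose proof (Rle_abs (re (u (mul e e)))).
    assert (norm (mul e e) <= 4) by nra. nra. }
  pose proof (Cmod_sq lam) as Hlam.
  destruct lam as [lr li]. simpl in *. rewrite Hz1, He1. split; [ring|].
  assert ((lr * lr + li * li) * re (u (mul e e)) <= (lr * lr + li * li) * (4 * M)).
  { apply Rmult_le_compat_l; nra. }
  nra.
Qed.

Lemma cross_term_bound (y : A) lam : eps y = C0 ->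
  im (Cadd (u (mul (star y) y)) (cross_term lam y)) = 0 /\
  - 4 * M * Cmod lam * Cmod lam <= re (Cadd (u (mul (star y) y)) (cross_term lam y)).
Proof.
  intro Hy. set (Q := Cadd (u (mul (star y) y)) (cross_term lam y)).
  set (K := 2 * Cmod lam * M). assert (HK : 0 <= K) by (pose proof (Cmod_ge0 lam); unfold K; nra).
  split.
  - assert (Habs : Rabs (im Q) <= 0).
    { apply (le_of_forall_sub_le 0 _ K HK). intros ep Hep.
      destruct (cross_term_approx y lam ep Hy Hep) as [c [Hc [Him _]]].
      fold Q in Him. rewrite Him. pose proof (Cmod_im c). unfold K in *. lra. }
    destruct (Req_dec (im Q) 0) as [|Hne]; [assumption|].
    pose proof (Rabs_pos_lt _ Hne). lra.
  - apply (le_of_forall_sub_le _ _ K HK). intros ep Hep.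
    destruct (cross_term_approx y lam ep Hy Hep) as [c [Hc [_ Hre]]].
    pose proof (Cmod_re c). pose proof (Rle_abs (- re c)). rewrite Rabs_Ropp in *.
    fold Q in Hre. unfold K in *. lra.
Qed.

Definition shifted_state (r : R) (x : A) : Cplx := Cadd (eps x) (Cmul (RtoC (1 / r)) (u x)).

Lemma shifted_state_linear r : is_linear (shifted_state r).
Proof.
  split; intros; unfold shifted_state.
  - rewrite (proj1 eps_linear), (proj1 u_linear). cplx.
  - rewrite (proj2 eps_linear), (proj2 u_linear). cplx.
Qed.

Lemma shifted_state_positive r : u one = C0 -> 4 * M < r -> is_positive (shifted_state r).
Proof.
  intros Hu1 HrM x. set (lam := eps x). set (y := sub x (smul lam one)).
  assert (Hx : x = add (smul lam one) y)
    by (unfold y; rewrite add_comm, sub_add_cancel; reflexivity).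
  assert (Hy : eps y = C0).
  { unfold y. rewrite (linear_sub eps eps_linear), (proj2 eps_linear), eps_one. fold lam. cplx. }
  destruct (cross_term_bound y lam Hy) as [Him Hre].
  assert (Heps : eps (mul (star x) x) = Cmul (Cconj lam) lam).
  { rewrite eps_mul, (character_star eps eps_linear eps_mul eps_one). reflexivity. }
  assert (Hv : shifted_state r (mul (star x) x) =
               Cadd (Cmul (Cconj lam) lam)
                    (Cmul (RtoC (1 / r)) (Cadd (u (mul (star y) y)) (cross_term lam y)))).
  { unfold shifted_state, cross_term. rewrite Heps, Hx, star_mul_unit_add.
    rewrite !(proj1 u_linear), !(proj2 u_linear), Hu1. cplx. }
  rewrite Hv. set (Q := Cadd (u (mul (star y) y)) (cross_term lam y)) in *. clearbody Q.
  assert (Hr : 0 < 1 / r) by (apply Rdiv_lt_0_compat; lra).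
  assert (Hrq : 4 * M * (1 / r) <= 1).
  { apply (Rmult_le_reg_r r); [lra|].
    replace (4 * M * (1 / r) * r) with (4 * M) by (field; lra). lra. }
  pose proof (Cmod_sq lam) as Hlam. pose proof (Cmod_ge0 lam).
  split; simpl; rewrite ?Him; [ring|].
  assert (4 * M * Cmod lam * Cmod lam * (1 / r) <= Cmod lam * Cmod lam) by nra.
  nra.
Qed.

End ShiftedState.

Theorem proposition3p2 (A : CstarAlg) (eps : A -> Cplx) (u : A -> Cplx) :
  is_character eps ->
  is_linear u -> is_bounded u -> (exists x, u x <> C0) ->
  u one = C0 ->
  (forall x : A, eps (mul (star x) x) = C0 -> Cnonneg (u (mul (star x) x))) ->
  exists r : R, 0 < r /\
    exists v : A -> Cplx, is_state v /\
      forall x : A, u x = Cmul (RtoC r) (Csub (v x) (eps x)).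
Proof.
  intros Hchar Hu [M HM] _ Hu1 Hpos.
  pose proof (character_one eps Hchar) as Hone. destruct Hchar as [Hlin [Hmul _]].
  assert (HM' : forall x, Cmod (u x) <= Rabs M * norm x).
  { intro x. eapply Rle_trans; [apply HM|].
    apply Rmult_le_compat_r; [apply norm_nonneg|apply Rle_abs]. }
  set (r := 4 * Rabs M + 1). pose proof (Rabs_pos M).
  exists r. split; [unfold r; lra|].
  exists (shifted_state eps u r). split; [split; [|split]|].
  - apply shifted_state_linear; auto.
  - apply (shifted_state_positive eps u Hlin Hmul Hone Hu (Rabs M)); auto. unfold r; lra.
  - unfold shifted_state. rewrite Hone, Hu1. cplx.
  - intro x. unfold shifted_state. cplx; field; unfold r; lra.
Qed.
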